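(* Let $d\in\{2,3\}$ and let $k^1,\dots,k^{d+1}\in\mathbb{Z}^d_0$ be given by $k^1=(0,1)$, $k^2=(1,0)$, $k^3=(1,1)$ when $d=2$, and $k^1=(0,0,1)$, $k^2=(0,1,0)$, $k^3=(1,0,0)$, $k^4=(1,1,1)$ when $d=3$. Let $K=\{k^1,\dots,k^{d+1}\}\cup\{-k^1,\dots,-k^{d+1}\}$. For $k\in\mathbb{Z}^d_0$ and $i\in\{1,\dots,d-1\}$ define the vector field on $\mathbb{T}^d\times SL_d(\mathbb{R})$ \[ Z_{k,i}(x,A)=\begin{pmatrix}e_k(x)\gamma_k^i\\ e_{-k}(x)(\gamma_k^i\otimes k)A\end{pmatrix}\in T_x\mathbb{T}^d\times T_ASL_d(\mathbb{R}). \] Then at each $(x,A)\in\mathbb{T}^d\times SL_d(\mathbb{R})$, \[ \operatorname{Span}\{Z_{k,i}(x,A):k\in K,\ i\in\{1,\dots,d-1\}\}=T_x\mathbb{T}^d\times T_ASL_d(\mathbb{R}). \]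
   Context: $\mathbb{T}^d=[0,2\pi]^d$ periodic; $\mathbb{Z}^d_+=\{k: k_d>0\}\cup\{k: k_1>0,k_d=0\}$, $\mathbb{Z}^d_-=-\mathbb{Z}^d_+$, $\mathbb{Z}^d_0=\mathbb{Z}^d\setminus\{0\}$; $e_k(x)=\sin(k\cdot x)$ for $k\in\mathbb{Z}^d_+$ and $\cos(k\cdot x)$ for $k\in\mathbb{Z}^d_-$. For each $k\in\mathbb{Z}^d_0$, $\gamma_k$ is a $d\times(d-1)$ matrix with columns $\gamma_k^1,\dots,\gamma_k^{d-1}$, $\gamma_k^\top k=0$, $\gamma_k^\top\gamma_k=\mathrm{Id}$, $\gamma_{-k}=-\gamma_k$. $\gamma\otimes k$ denotes the matrix $\gamma k^\top$. (These $Z_{k,i}$ are the Lie brackets $[e_k\gamma_k^i,G]$ with the drift $G$ of $\dot x=u(x)$, $\dot A=\nabla u(x)A$.) *)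

From HB Require Import structures.
From mathcomp Require Import all_boot all_order all_algebra.
From mathcomp Require Import reals trigo.
Set Implicit Arguments. Unset Strict Implicit. Unset Printing Implicit Defensive.
Import Order.TTheory GRing.Theory Num.Theory.
Local Open Scope ring_scope.

Definition kR (R : realType) (d : nat) (k : 'cV[int]_d) : 'cV[R]_d := map_mx intr k.

(* Z^d_+ : the sign of the last non-zero coordinate is positive
   (for d = 2 this is exactly {k_2 > 0} u {k_1 > 0, k_2 = 0}). *)
Definition posZ (d : nat) (k : 'cV[int]_d) : bool :=
  [exists i : 'I_d, (0 < k i 0) && [forall j : 'I_d, (i < j)%N ==> (k j 0 == 0)]].

Definition kdot (R : realType) (d : nat) (k : 'cV[int]_d) (x : 'cV[R]_d) : R :=
  \sum_(l < d) (kR R k) l 0 * x l 0.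

Definition ek (R : realType) (d : nat) (k : 'cV[int]_d) (x : 'cV[R]_d) : R :=
  if posZ k then sin (kdot k x) else cos (kdot k x).

Definition gamma_ok (R : realType) (d : nat) (gamma : 'cV[int]_d -> 'M[R]_(d, d.-1)) : Prop :=
  forall k : 'cV[int]_d, k != 0 ->
    [/\ (gamma k)^T *m kR R k = 0,
        (gamma k)^T *m gamma k = 1%:M &
        gamma (- k) = - gamma k].

(* the vectors k^1, ..., k^{d+1}: k^j = e_{d+1-j} for j <= d, k^{d+1} = (1,...,1) *)
Definition kvec (d : nat) (j : 'I_d.+1) : 'cV[int]_d :=
  \col_(l < d) (if (j < d)%N then ((l : nat) == (d - 1 - j)%N)%:R else 1).

Definition Kseq (d : nat) : seq 'cV[int]_d :=
  [seq kvec j | j <- enum 'I_d.+1] ++ [seq - kvec j | j <- enum 'I_d.+1].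

Definition Zfield (R : realType) (d : nat) (gamma : 'cV[int]_d -> 'M[R]_(d, d.-1))
  (k : 'cV[int]_d) (i : 'I_d.-1) (x : 'cV[R]_d) (A : 'M[R]_d) : 'cV[R]_d * 'M[R]_d :=
  (ek k x *: col i (gamma k),
   ek (- k) x *: (col i (gamma k) *m (kR R k)^T *m A)).

Definition Zseq (R : realType) (d : nat) (gamma : 'cV[int]_d -> 'M[R]_(d, d.-1))
  (x : 'cV[R]_d) (A : 'M[R]_d) : seq ('cV[R]_d * 'M[R]_d) :=
  [seq Zfield gamma k i x A | k <- Kseq d, i <- enum 'I_d.-1].

(* T_A SL_d(R) = kernel of the differential of det at A: B |-> tr(adj(A) B) *)
Definition tangentSL (R : realType) (d : nat) (A B : 'M[R]_d) : bool :=
  \tr (\adj A *m B) == 0.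

From HB Require Import structures.
From mathcomp Require Import all_boot all_order all_algebra.
From mathcomp Require Import reals trigo.
Set Implicit Arguments. Unset Strict Implicit. Unset Printing Implicit Defensive.
Import Order.TTheory GRing.Theory Num.Theory.
Local Open Scope ring_scope.

(* For k with e_k = sin (k.x) and e_(-k) = cos (k.x), the pair Z_(k,i), Z_(-k,i)
   is a rotation of (gamma_k^i, 0) and (0, gamma_k^i k^T A), so both lie in the
   span; as the columns of gamma_k span the orthogonal of k, so do (v, 0) and
   (0, v k^T A) for every v orthogonal to k.  The coordinate vectors k give every
   (e_j, 0) and every (0, E_ab A) with a <> b, and k = (1, ..., 1) gives
   (0, (e_a - e_0) 1^T A); these span R^d x {M A | tr M = 0} = T_x T^d x T_A SL_d.
   Conversely each Z_(k,i) is tangent: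
   tr (adj A gamma_k^i k^T A) = det A (k . gamma_k^i) = 0. *)

Section OrthogonalComplement.
Variable R : fieldType.

Lemma mulmx_sum_col m p (g : 'M[R]_(m, p)) (w : 'cV[R]_p) :
  g *m w = \sum_i w i 0 *: col i g.
Proof.
apply/matrixP => a b; rewrite !mxE summxE; apply: eq_bigr => i _.
by rewrite !mxE (ord1 b) mulrC.
Qed.

Variable n : nat.
Variables (g : 'M[R]_(n.+1, n)) (k : 'cV[R]_n.+1).
Hypotheses (g_orthonormal : g^T *m g = 1%:M) (g_orthogonal : g^T *m k = 0)
  (k_nondegenerate : (k^T *m k) 0 0 != 0).

(* [row_mx k g] has Gram matrix [diag (k^T k) 1], so its transpose is injective
   and kills [v - g g^T v]. *)
Lemma orthonormal_complement_projK (v : 'cV[R]_n.+1) :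
  k^T *m v = 0 -> g *m (g^T *m v) = v.
Proof.
move=> kv.
pose Q := row_mx k g.
have kg : k^T *m g = 0 by rewrite -[g]trmxK -trmx_mul g_orthogonal trmx0.
have QTQ : Q^T *m Q = block_mx (k^T *m k) 0 0 1%:M.
  by rewrite tr_row_mx mul_col_row kg g_orthogonal g_orthonormal.
have QT_unit : Q^T \in unitmx.
  have : Q^T *m Q \in unitmx.
    by rewrite unitmxE QTQ det_ublock det1 mulr1 det_mx11 unitfE.
  by rewrite unitmx_mul => /andP[].
have QTr : Q^T *m (v - g *m (g^T *m v)) = 0.
  rewrite tr_row_mx mul_col_mx !mulmxBr !mulmxA kg g_orthonormal mul0mx mul1mx kv.
  by rewrite !subrr mul0mx subrr col_mx0.
apply/eqP; rewrite eq_sym -subr_eq0.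
by rewrite -[X in X == 0](mulKmx QT_unit) QTr mulmx0.
Qed.

Lemma orthogonal_memv (U : {vspace 'cV[R]_n.+1}) (v : 'cV[R]_n.+1) :
  (forall i, col i g \in U) -> k^T *m v = 0 -> v \in U.
Proof.
move=> gU /orthonormal_complement_projK <-; rewrite mulmx_sum_col.
by apply: memv_suml => i _; apply: memvZ.
Qed.

End OrthogonalComplement.

Lemma rotation_memv (K : fieldType) (vT : vectType K) (U : {vspace vT})
    (a b : K) (u v : vT) :
  a ^+ 2 + b ^+ 2 = 1 -> a *: u + b *: v \in U -> a *: v - b *: u \in U ->
  u \in U /\ v \in U.
Proof.
move=> ab1 Uz Uz'; split.
- have := memvB (memvZ a Uz) (memvZ b Uz').
  rewrite !scalerDr !scalerN !scalerA opprB addrACA -scalerDl -scalerBl.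
  by rewrite [b * a]mulrC subrr scale0r addr0 -!expr2 ab1 scale1r.
- have := memvD (memvZ b Uz) (memvZ a Uz').
  rewrite !scalerDr !scalerN !scalerA addrACA [(b * a) *: u + _]addrC addrACA.
  rewrite -scalerDl -scalerBl.
  by rewrite [b * a]mulrC subrr scale0r addr0 -!expr2 ab1 scale1r.
Qed.

Section TracelessMatrices.
Variables (R : fieldType) (n : nat) (U : {vspace 'M[R]_n.+1}).
Hypothesis offdiag_U : forall a b : 'I_n.+1, a != b -> delta_mx a b \in U.

Lemma zero_diag_memv (N : 'M[R]_n.+1) : (forall c, N c c = 0) -> N \in U.
Proof.
move=> N_diag; rewrite (matrix_sum_delta N).
apply: memv_suml => a _; apply: memv_suml => b _.
have [<-|ab] := eqVneq a b; first by rewrite N_diag scale0r mem0v.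
exact/memvZ/offdiag_U.
Qed.

Hypothesis rank_one_U : forall a : 'I_n.+1,
  (delta_mx a 0 - delta_mx 0 0) *m (const_mx 1 : 'rV[R]_n.+1) \in U.

(* Subtracting [\sum_a M a a *: (e_a - e_0) 1^T] kills the diagonal of a
   traceless [M]. *)
Lemma traceless_memv (M : 'M[R]_n.+1) : \tr M = 0 -> M \in U.
Proof.
move=> trM0.
pose D := \sum_a M a a *:
  ((delta_mx a 0 - delta_mx 0 0) *m (const_mx 1 : 'rV[R]_n.+1)).
have DE c b : D c b = M c c - (c == 0)%:R * \tr M.
  rewrite summxE.
  under eq_bigr do rewrite !mxE big_ord1 !mxE !eqxx !andbT mulr1 mulrBr.
  rewrite sumrB -mulr_suml mulrC (bigD1 c) //= eqxx mulr1 big1 ?addr0 // => a.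
  by rewrite eq_sym => /negbTE ->; rewrite mulr0.
rewrite -(subrK D M); apply: memvD.
  by apply: zero_diag_memv => c; rewrite !mxE DE trM0 mulr0 subr0 subrr.
by apply: memv_suml => a _; apply/memvZ/rank_one_U.
Qed.
End TracelessMatrices.

Section TangentCoordinates.
Variables (R : fieldType) (m : nat) (A : 'M[R]_m).

(* [vertical M] is the right translate [M A], which lies in [T_A SL_d] iff
   [tr M = 0]; [ddet_snd] is the differential of [det] at [A], applied to the
   matrix component. *)
Definition horizontal (v : 'cV[R]_m) : 'cV[R]_m * 'M[R]_m := (v, 0).
Definition vertical (M : 'M[R]_m) : 'cV[R]_m * 'M[R]_m := (0, M *m A).
Definition ddet_snd (w : 'cV[R]_m * 'M[R]_m) : R^o := \tr (\adj A *m w.2).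

Fact horizontal_is_linear : linear horizontal.
Proof.
by move=> a u v; rewrite /horizontal; congr pair; rewrite /= scaler0 addr0.
Qed.
HB.instance Definition _ := GRing.isLinear.Build R _ _
  *:%R horizontal horizontal_is_linear.

Fact vertical_is_linear : linear vertical.
Proof.
move=> a M N; rewrite /vertical; congr pair.
  by rewrite /= scaler0 addr0.
by rewrite /= mulmxDl scalemxAl.
Qed.
HB.instance Definition _ := GRing.isLinear.Build R _ _
  *:%R vertical vertical_is_linear.

Fact ddet_snd_is_linear : linear ddet_snd.
Proof.
by move=> a u v; rewrite /ddet_snd /= mulmxDr -scalemxAr mxtraceD mxtraceZ.
Qed.
HB.instance Definition _ := GRing.isLinear.Build R _ _
  *:%R ddet_snd ddet_snd_is_linear.

Lemma ddet_horizontal v : ddet_snd (horizontal v) = 0.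
Proof. by rewrite /ddet_snd mulmx0 mxtrace0. Qed.

Lemma ddet_vertical M : ddet_snd (vertical M) = \det A * \tr M.
Proof.
by rewrite /ddet_snd mxtrace_mulC -mulmxA mul_mx_adj mul_mx_scalar mxtraceZ.
Qed.

Lemma horizontal_vertical_decomposition (w : 'cV[R]_m * 'M[R]_m) :
  \det A = 1 -> w = horizontal w.1 + vertical (w.2 *m \adj A).
Proof.
move=> detA; case: w => v B; rewrite /horizontal /vertical /=.
by congr pair; rewrite /= ?addr0 ?add0r // -mulmxA mul_adj_mx detA mulmx1.
Qed.

Lemma ddet_snd_trace (w : 'cV[R]_m * 'M[R]_m) :
  ddet_snd w = \tr (w.2 *m \adj A).
Proof. exact: mxtrace_mulC. Qed.

End TangentCoordinates.

Lemma trmx_mul_self_neq0 (R : realFieldType) m (v : 'cV[R]_m) :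
  v != 0 -> (v^T *m v) 0 0 != 0.
Proof.
apply: contraNneq; rewrite mxE => /eqP; under eq_bigr do rewrite mxE -expr2.
rewrite psumr_eq0 => [/allP v0|i _]; last exact: sqr_ge0.
apply/eqP/matrixP => i j; rewrite (ord1 j) mxE.
by apply/eqP; rewrite -sqrf_eq0; apply: v0; rewrite mem_index_enum.
Qed.

Section LatticeVectors.
Variables (R : realType) (d : nat).
Implicit Types (k : 'cV[int]_d) (x : 'cV[R]_d).

Lemma kRN k : kR R (- k) = - kR R k.
Proof. by apply/matrixP => i j; rewrite !mxE rmorphN. Qed.

Lemma kR_eq0 k : (kR R k == 0) = (k == 0).
Proof.
apply/eqP/eqP => [/matrixP k0|->]; last by apply/matrixP => i j; rewrite !mxE.
by apply/matrixP => i j; have /eqP := k0 i j; rewrite !mxE intr_eq0 => /eqP.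
Qed.

Lemma kdotN k x : kdot (- k) x = - kdot k x.
Proof. by rewrite /kdot kRN -sumrN; apply: eq_bigr => i _; rewrite mxE mulNr. Qed.

Lemma ek_sqrDekN k x :
  posZ k -> ~~ posZ (- k) -> ek k x ^+ 2 + ek (- k) x ^+ 2 = 1.
Proof.
move=> kpos kNpos; rewrite /ek kpos (negbTE kNpos) kdotN cosN.
by rewrite addrC cos2Dsin2.
Qed.

Lemma posZ_ge0 k : (forall i, 0 <= k i 0) -> k != 0 -> posZ k.
Proof.
move=> k_ge0 k_neq0.
have /existsP[i0 ki0] : [exists i, k i 0 != 0].
  apply: contraNT k_neq0 => /existsPn k0; apply/eqP/matrixP => i j.
  by rewrite (ord1 j) mxE; apply/eqP/negbNE/k0.
case: (@arg_maxnP _ i0 (fun i => k i 0 != 0) val ki0) => i ki i_max.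
apply/existsP; exists i; rewrite lt0r ki k_ge0 /=; apply/forallP => j.
by apply/implyP; apply: contraTT => kj; rewrite -leqNgt; apply: i_max.
Qed.

Lemma posZN_ge0 k : (forall i, 0 <= k i 0) -> ~~ posZ (- k).
Proof.
move=> k_ge0; apply/existsP => -[i /andP[]]; rewrite mxE oppr_gt0.
by rewrite ltNge k_ge0.
Qed.

Lemma kvec_ge0 (j : 'I_d.+1) i : 0 <= kvec j i 0.
Proof. by rewrite mxE; case: ifP. Qed.

Lemma kvec_in_Kseq (j : 'I_d.+1) : kvec j \in Kseq d.
Proof. by rewrite mem_cat map_f ?mem_enum. Qed.

Lemma opp_kvec_in_Kseq (j : 'I_d.+1) : - kvec j \in Kseq d.
Proof. by rewrite mem_cat (map_f (fun j => - kvec j)) ?mem_enum ?orbT. Qed.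

End LatticeVectors.

Section ExplicitLatticeVectors.
Variables (R : realType) (m : nat).

Lemma kvec_inord (j : 'I_m.+2) : kvec j (inord (m - j)) 0 = 1.
Proof.
rewrite mxE; case: ifP => // jm; rewrite inordK ?subn1 ?eqxx //.
by rewrite ltnS leq_subr.
Qed.

Lemma kvec_neq0 (j : 'I_m.+2) : kvec j != 0.
Proof.
by apply/eqP => /matrixP /(_ (inord (m - j)) 0); rewrite kvec_inord mxE.
Qed.

Lemma Kseq_neq0 k : k \in Kseq m.+1 -> k != 0.
Proof.
by rewrite mem_cat => /orP[] /mapP[j _ ->]; rewrite ?oppr_eq0 kvec_neq0.
Qed.

Lemma kR_kvec_delta (l : 'I_m.+1) :
  kR R (kvec (inord (m - l) : 'I_m.+2)) = delta_mx l 0.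
Proof.
have lm : (m - l < m.+1)%N by rewrite ltnS leq_subr.
apply/matrixP => i j; rewrite !mxE (ord1 j) eqxx andbT.
rewrite inordK ?lm; last exact: ltnW.
by rewrite subn1 /= subKn ?rmorph_nat // -ltnS.
Qed.

Lemma kR_kvec_max : kR R (kvec (ord_max : 'I_m.+2)) = const_mx 1.
Proof. by apply/matrixP => i j; rewrite !mxE ltnn. Qed.

End ExplicitLatticeVectors.

Lemma memv_preim_linfun (K : fieldType) (aT rT : vectType K)
    (f : {linear aT -> rT}) (U : {vspace rT}) u :
  (f u \in U) = (u \in linfun f @^-1: U)%VS.
Proof. by rewrite -memv_preim lfunE. Qed.

Section Spanning.
Variables (R : realType) (n : nat).
Variable gamma : 'cV[int]_n.+2 -> 'M[R]_(n.+2, n.+1).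
Hypothesis gammaP : gamma_ok gamma.
Variables (x : 'cV[R]_n.+2) (A : 'M[R]_n.+2).
Local Notation V := <<Zseq gamma x A>>%VS.

Lemma Zfield_in_span k i : k \in Kseq n.+2 -> Zfield gamma k i x A \in V.
Proof.
by move=> Kk; apply/memv_span/allpairsP; exists (k, i); rewrite mem_enum.
Qed.

Lemma ZfieldE k i : Zfield gamma k i x A =
  ek k x *: horizontal (col i (gamma k))
  + ek (- k) x *: vertical A (col i (gamma k) *m (kR R k)^T).
Proof. by congr pair; rewrite /= ?scaler0 ?addr0 ?add0r // mulmxA. Qed.

Lemma kR_orthogonal_gamma k i : k != 0 -> (kR R k)^T *m col i (gamma k) = 0.
Proof.
case/gammaP => gk _ _.
by rewrite -[col _ _]trmxK -trmx_mul tr_col -row_mul gk row0 trmx0.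
Qed.

Lemma generators_in_span k i : k \in Kseq n.+2 -> - k \in Kseq n.+2 ->
    posZ k -> ~~ posZ (- k) ->
  horizontal (col i (gamma k)) \in V
  /\ vertical A (col i (gamma k) *m (kR R k)^T) \in V.
Proof.
move=> Kk KNk kpos kNpos; have [_ _ gammaN] := gammaP (Kseq_neq0 Kk).
apply: (rotation_memv (ek_sqrDekN x kpos kNpos)).
  by rewrite -ZfieldE; apply: Zfield_in_span.
have := Zfield_in_span i KNk; rewrite ZfieldE opprK gammaN kRN.
rewrite [col i (- _)]raddfN [(- kR R k)^T]raddfN mulNmx mulmxN opprK.
by rewrite [horizontal _]raddfN scalerN addrC.
Qed.

Lemma kvec_orthogonal_in_span j v : (kR R (kvec j))^T *m v = 0 ->
  horizontal v \in V /\ vertical A (v *m (kR R (kvec j))^T) \in V.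
Proof.
move=> kv; have k_neq0 := kvec_neq0 j.
have [g_orth g_orthonormal _] := gammaP k_neq0.
have kk : ((kR R (kvec j))^T *m kR R (kvec j)) 0 0 != 0.
  by apply: trmx_mul_self_neq0; rewrite kR_eq0.
have gen i := generators_in_span i (kvec_in_Kseq j) (opp_kvec_in_Kseq j)
  (posZ_ge0 (kvec_ge0 j) k_neq0) (posZN_ge0 (kvec_ge0 j)).
split.
  rewrite memv_preim_linfun.
  apply: (orthogonal_memv g_orthonormal g_orth kk _ kv).
  by move=> i; rewrite -memv_preim_linfun; case: (gen i).
rewrite (memv_preim_linfun (vertical A \o mulmxr (kR R (kvec j))^T)).
apply: (orthogonal_memv g_orthonormal g_orth kk _ kv).
by move=> i; rewrite -memv_preim_linfun; case: (gen i).
Qed.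

Lemma delta_horizontal_in_span l : horizontal (delta_mx l 0) \in V.
Proof.
pose l' : 'I_n.+2 := if l == 0 then ord_max else 0.
have l'l : l' != l.
  by rewrite /l'; have [->|l0] := eqVneq l 0; rewrite // eq_sym.
have [] // :=
  kvec_orthogonal_in_span (j := inord (n.+1 - l')) (v := delta_mx l 0).
by rewrite kR_kvec_delta trmx_delta mul_delta_mx_0.
Qed.

Lemma horizontal_in_span v : horizontal v \in V.
Proof.
rewrite memv_preim_linfun (matrix_sum_delta v); apply: memv_suml => l _.
rewrite big_ord1; apply: memvZ; rewrite -memv_preim_linfun.
exact: delta_horizontal_in_span.
Qed.

Lemma offdiag_vertical_in_span a b : a != b -> vertical A (delta_mx a b) \in V.
Proof.
move=> ab.
have [] // :=
  kvec_orthogonal_in_span (j := inord (n.+1 - b)) (v := delta_mx a 0).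
  by rewrite kR_kvec_delta trmx_delta mul_delta_mx_0 // eq_sym.
by rewrite kR_kvec_delta trmx_delta mul_delta_mx.
Qed.

Lemma rank_one_vertical_in_span a :
  vertical A ((delta_mx a 0 - delta_mx 0 0) *m (const_mx 1 : 'rV[R]_n.+2)) \in V.
Proof.
have [] // := kvec_orthogonal_in_span (j := ord_max)
  (v := delta_mx a 0 - delta_mx 0 0); rewrite kR_kvec_max trmx_const //.
by rewrite mulmxBr -!colE !col_const subrr.
Qed.

Lemma vertical_in_span M : \tr M = 0 -> vertical A M \in V.
Proof.
move=> trM0; rewrite memv_preim_linfun.
apply: traceless_memv trM0 => [a b ab|a]; rewrite -memv_preim_linfun.
  exact: offdiag_vertical_in_span.
exact: rank_one_vertical_in_span.
Qed.

Lemma span_Zseq_le_ker : (V <= lker (linfun (ddet_snd A)))%VS.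
Proof.
apply/span_subvP => _ /allpairsP[[k i] [/= Kk _ ->]].
rewrite memv_ker lfunE ZfieldE linearD !linearZ /= ddet_horizontal.
rewrite ddet_vertical mxtrace_mulC kR_orthogonal_gamma ?Kseq_neq0 //.
by rewrite mxtrace0 mulr0 !scaler0 addr0.
Qed.

Hypothesis detA : \det A = 1.

Lemma span_Zseq_ddet w : (w \in V) = (ddet_snd A w == 0).
Proof.
apply/idP/idP => [/(subvP span_Zseq_le_ker)|ddet_w].
  by rewrite memv_ker lfunE.
rewrite (horizontal_vertical_decomposition w detA).
apply: memvD; first exact: horizontal_in_span.
by apply: vertical_in_span; rewrite -ddet_snd_trace; apply/eqP.
Qed.

End Spanning.

Theorem lemma5p4 (R : realType) (d : nat) (hd : d = 2%N \/ d = 3%N)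
  (gamma : 'cV[int]_d -> 'M[R]_(d, d.-1)) (hgamma : gamma_ok gamma)
  (x : 'cV[R]_d) (A : 'M[R]_d) (hA : \det A = 1) :
  forall w : 'cV[R]_d * 'M[R]_d,
    (w \in <<Zseq gamma x A>>%VS) = tangentSL A w.2.
Proof.
by case: hd => d_eq; subst d; apply: span_Zseq_ddet.
Qed.
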